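(* Fix $m<n$. The triples of statistics $(\mathrm{Rec},\mathrm{psa},\mathrm{wait})$ on the set of ordered $(m,n)$-forests and $(\mathrm{Rec},\mathrm{lucky},\mathrm{probes})$ on the set of $(m,n)$-parking functions are jointly equidistributed: for every set $R$ and integers $a,b$, the number of ordered $(m,n)$-forests $F$ with $(\mathrm{Rec}(F),\mathrm{psa}(F),\mathrm{wait}(F))=(R,a,b)$ equals the number of $(m,n)$-parking functions $\pi$ with $(\mathrm{Rec}(\pi),\mathrm{lucky}(\pi),\mathrm{probes}(\pi))=(R,a,b)$.
   Context: $[n]=\{1,\dots,n\}$, $[n]_0=\{0,\dots,n\}$. Ordered forests: an ordered $(m,n)$-forest is a rooted forest with $n+1$ nodes and $m$ edges whose component trees $T_0,\dots,T_{n-m}$ are totally ordered, with roots unlabeled and marked $\circ,\circ_1,\dots,\circ_{n-m}$, and with its $m$ non-root vertices labeled bijectively by $[m]$. Priority search on $F$: initially only the children of $\circ$ are unblocked; at each step one visits the unblocked unvisited node with the smallest label and unblocks its children; when all nodes of a tree have been visited, one moves to the next tree, visits its root and unblocks the root's children. Steps are numbered $1,\dots,n$, with $\circ$ considered visited at step $0$. The priority traversal of $F$ is the word whose $i$-th letter is the label of the node visited at step $i$, or $-$ if that node is a root. A forest record of $F$ is a non-root node whose label is the largest label among the non-root nodes on the path from its root to it; $\mathrm{Rec}(F)$ is the set of forest records. A non-root vertex is a priority small ascent if it is visited at the step immediately after its parent; $\mathrm{psa}(F)$ is their number. The waiting time of a non-root vertex visited at step $b$ whose parent was visited at step $a$ is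 $b-a$ (the number of steps during which it is unblocked, counting the step at which it is visited); $\mathrm{wait}(F)$ is the sum of waiting times over all non-root vertices. Partial parking functions: an $(m,n)$-parking function is a map $\pi:[m]\to[n]$ such that when cars $1,\dots,m$ arrive in order to spots $1,\dots,n$ and car $i$ parks in the first empty spot $\ge\pi(i)$, all cars park. Its bird's eye permutation is the word $\omega(1)\cdots\omega(n)$ where $\omega(s)$ is the car parked at spot $s$, or $-$ if spot $s$ is empty. A record of a word in $[m]\cup\{-\}$ is a left-to-right maximum of one of its maximal subwords not containing $-$; $\mathrm{Rec}(\pi)$ is the set of records of the bird's eye permutation of $\pi$. A car is lucky if it parks at its preferred spot; $\mathrm{lucky}(\pi)$ is the number of lucky cars. $\mathrm{probes}(\pi)$ is the total number of parking attempts (successful or not) of all cars, where car $i$ parking at spot $s$ makes $s-\pi(i)+1$ attempts. *)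

From mathcomp Require Import all_boot.
Set Implicit Arguments. Unset Strict Implicit. Unset Printing Implicit Defensive.

(* Conventions: the label j+1 of [m] is represented by j : 'I_m; the spot s+1
   of [n] by s : 'I_n (or the nat s); car j+1 by j. *)

(* Nodes: roots inl r (r : 'I_(n-m).+1, r = 0 is the
   root "o", r = j is "o_j") and non-root vertices inr v (v : 'I_m).
   A forest is given by the parent function of its non-root vertices.      *)
Definition node (m n : nat) := ('I_(n - m).+1 + 'I_m)%type.
Definition forestfun (m n : nat) := {ffun 'I_m -> node m n}.

Definition parent m n (F : forestfun m n) (x : node m n) : node m n :=
  match x with inl r => inl r | inr v => F v end.

Definition is_root m n (x : node m n) : bool :=
  if x is inl _ then true else false.

Definition is_forest m n (F : forestfun m n) : bool :=
  [forall v : 'I_m, is_root (iter m (parent F) (inr v))].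

(* Priority search: given the sequence of visited nodes, the next visited
   node is the unvisited non-root vertex of smallest label whose parent is
   visited (= unblocked), or, if there is none, the next root. *)
Definition next_node m n (F : forestfun m n) (vis : seq (node m n)) : node m n :=
  match [seq v <- enum 'I_m | (inr v \notin vis) && (parent F (inr v) \in vis)] with
  | v :: _ => inr v
  | [::] => inl (inord (count (@is_root m n) vis))
  end.

Definition search m n (F : forestfun m n) : seq (node m n) :=
  iter n (fun vis => rcons vis (next_node F vis)) [:: inl ord0].

Definition step m n (F : forestfun m n) (x : node m n) : nat := index x (search F).

Definition forest_rec m n (F : forestfun m n) : {set 'I_m} :=
  [set v : 'I_m | [forall k : 'I_m.+1, (0 < k) ==>
      match iter k (parent F) (inr v) with inr u => u < v | inl _ => true end]].

Definition psa m n (F : forestfun m n) : nat :=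
  #|[set v : 'I_m | step F (inr v) == (step F (parent F (inr v))).+1]|.

Definition wait m n (F : forestfun m n) : nat :=
  \sum_(v < m) (step F (inr v) - step F (parent F (inr v))).

(* Partial parking functions.  park n prefs = Some spots where spots is the
   list of spots (0-based) where cars 1,2,... park, or None if some car fails. *)
Definition park (n : nat) (prefs : seq nat) : option (seq nat) :=
  foldl (fun o p => if o is Some occ then
           (if [seq s <- iota p (n - p) | s \notin occ] is s :: _
            then Some (rcons occ s) else None)
         else None) (Some [::]) prefs.

Definition prefs m n (pi : {ffun 'I_m -> 'I_n}) : seq nat :=
  [seq val (pi i) | i <- enum 'I_m].

Definition is_pf m n (pi : {ffun 'I_m -> 'I_n}) : bool :=
  park n (prefs pi) != None.

Definition spots m n (pi : {ffun 'I_m -> 'I_n}) : seq nat :=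
  odflt [::] (park n (prefs pi)).

Definition spot m n (pi : {ffun 'I_m -> 'I_n}) (i : 'I_m) : nat :=
  nth 0 (spots pi) i.

(* car j is a record of the bird's eye word: every car parked to its left in
   the same maximal block of occupied spots has a smaller number. The car
   parked at spot t is index t (spots pi). *)
Definition pf_rec m n (pi : {ffun 'I_m -> 'I_n}) : {set 'I_m} :=
  [set i : 'I_m | [forall t : 'I_n,
     ((t < spot pi i) && all (fun s => s \in spots pi) (iota t (spot pi i - t)))
       ==> (index (val t) (spots pi) < i)]].

Definition lucky m n (pi : {ffun 'I_m -> 'I_n}) : nat :=
  #|[set i : 'I_m | spot pi i == pi i]|.

Definition probes m n (pi : {ffun 'I_m -> 'I_n}) : nat :=
  \sum_(i < m) (spot pi i - pi i).+1.

(* The bijection sends an ordered forest F to the parking function in which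
   car v prefers the spot following the step at which the parent of v is
   visited (spots and steps numbered from 1).  Priority search and parking are
   then the same process: the vertex visited at step k is the smallest
   unblocked one, i.e. the smallest car that reached spot k without finding a
   free spot before it.  So car v parks at spot step(v), and spot k is empty
   exactly when a root is visited at step k.  Hence lucky cars are the priority
   small ascents and probes are waiting times.  Every vertex visited strictly
   between a vertex and its parent has a smaller label, so the largest label
   visited in a tree before v is carried by an ancestor of v, and the records
   of the bird's eye word are the forest records.  Conversely, pi determines
   the traversal word (the car parked at spot k at step k, the next root at
   each empty spot), and the parent of v is the node at position pi(v). *)

From mathcomp Require Import all_boot zify.
Set Implicit Arguments. Unset Strict Implicit. Unset Printing Implicit Defensive.

Section Grow.
Variables (T : Type) (x0 : T).

Definition grow (f : seq T -> T) k := iter k (fun w => rcons w (f w)) [:: x0].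

Lemma size_grow f k : size (grow f k) = k.+1.
Proof. by elim: k => //= k IH; rewrite size_rcons IH. Qed.

Lemma take_grow f k n : k <= n -> take k.+1 (grow f n) = grow f k.
Proof.
move/subnKC <-; elim: (n - k) => [|d IH]; first by rewrite addn0 take_oversize ?size_grow.
by rewrite addnS /= -cats1 takel_cat ?size_grow ?leq_addr.
Qed.

Lemma nth_grow0 f n : nth x0 (grow f n) 0 = x0.
Proof. by rewrite -(nth_take x0 (ltnSn 0)) take_grow. Qed.

Lemma nth_growS f k n : k < n -> nth x0 (grow f n) k.+1 = f (grow f k).
Proof.
move=> lt_kn; rewrite -(nth_take x0 (ltnSn k.+1)) take_grow //=.
by rewrite nth_rcons size_grow ltnn eqxx.
Qed.

Lemma eq_grow f g n :
  (forall k, k < n -> f (grow f k) = g (grow f k)) -> grow f n = grow g n.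
Proof.
elim: n => // n IH eq_fg /=.
by rewrite -IH ?eq_fg // => k lt_kn; apply: eq_fg; apply: ltnW.
Qed.

End Grow.

(** * Parking *)

Lemma filter_iota_consP (P : pred nat) a k y :
  (exists l, filter P (iota a k) = y :: l) <->
  [/\ a <= y < a + k, P y & forall s, a <= s < y -> ~~ P s].
Proof.
elim: k a => [|k IH] a /=; first by split=> [[]|[]] //; lia.
case: ifP => Pa.
  split=> [[l [<-]]|[rng Py min_y]]; first by split=> //; lia.
  have -> : y = a by case: (ltnP a y) => ?; [move: (min_y a); rewrite Pa; lia | lia].
  by eexists.
rewrite IH; split=> -[rng Py min_y]; split=> //.
- lia.
- move=> s rng_s; case: (ltnP a s) => ?; first by apply: min_y; lia.
  have -> : s = a by lia.
  by rewrite Pa.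
- by case: (eqVneq a y) => [ay|]; [move: Pa; rewrite ay Py | lia].
- by move=> s rng_s; apply: min_y; lia.
Qed.

Lemma park_rcons n p x occ' :
  park n (rcons p x) = Some occ' <->
  exists occ y, [/\ park n p = Some occ, occ' = rcons occ y,
    x <= y < n, y \notin occ & forall s, x <= s < y -> s \in occ].
Proof.
rewrite /park foldl_rcons -/(park n p); case: (park n p) => [occ|]; last first.
  by split=> [|[? [? []]]].
case E: [seq s <- _ | _] => [|y l].
  split=> // -[_ [y [[<-] _ rng free min_y]]].
  have [l' ] : exists l, [seq s <- iota x (n - x) | s \notin occ] = y :: l.
    by apply/filter_iota_consP; split=> // [|s /min_y ->]; lia.
  by rewrite E.
have [rng free min_y] := (filter_iota_consP _ _ _ _).1 (ex_intro _ l E).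
split=> [[<-]|[_ [y' [[<-] -> rng' free' min_y']]]].
  by exists occ, y; split=> // [|s /min_y]; [lia | rewrite negbK].
have [l' E'] : exists l, [seq s <- iota x (n - x) | s \notin occ] = y' :: l.
  by apply/filter_iota_consP; split=> // [|s /min_y' ->]; lia.
by rewrite E in E'; case: E' => ->.
Qed.

Definition parks_at n (p occ : seq nat) :=
  size occ = size p /\ forall i, i < size p ->
  [/\ nth 0 p i <= nth 0 occ i < n, nth 0 occ i \notin take i occ &
      forall s, nth 0 p i <= s < nth 0 occ i -> s \in take i occ].

Lemma parks_at_rcons n p x occ y :
  parks_at n (rcons p x) (rcons occ y) <->
  parks_at n p occ /\
  [/\ x <= y < n, y \notin occ & forall s, x <= s < y -> s \in occ].
Proof.
rewrite /parks_at !size_rcons; split=> [[/eqP]|[[size_occ car_i] car_x]].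
  rewrite eqSS => /eqP size_occ car_i; split.
    split=> // i lt_ip; have := car_i i (ltnW lt_ip).
    by rewrite !nth_rcons -cats1 takel_cat size_occ ?lt_ip // ltnW.
  have := car_i (size p) (ltnSn _).
  by rewrite !nth_rcons size_occ ltnn eqxx -size_occ -cats1 take_size_cat.
split=> [|i]; first by rewrite size_occ.
rewrite ltnS leq_eqVlt => /orP [/eqP ->|lt_ip].
  by rewrite !nth_rcons size_occ ltnn eqxx -size_occ -cats1 take_size_cat.
by rewrite !nth_rcons -cats1 takel_cat size_occ ?lt_ip; [apply: car_i | apply: ltnW].
Qed.

Lemma parkP n p occ : park n p = Some occ <-> parks_at n p occ.
Proof.
elim/last_ind: p occ => [|p x IH] occ.
  by split=> [[<-]|[/size0nil ->]].
rewrite park_rcons; split=> [[occ' [y [/IH park_p -> rng free min_y]]]|].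
  exact/parks_at_rcons.
case/lastP: occ => [[]|occ y]; first by rewrite size_rcons.
by case/parks_at_rcons=> /IH park_p [rng free min_y]; exists occ, y.
Qed.

Lemma nth_map_enum m (f : 'I_m -> nat) (i : 'I_m) :
  nth 0 [seq f j | j <- enum 'I_m] i = f i.
Proof. by rewrite (nth_map i) ?size_enum_ord // nth_ord_enum. Qed.

Lemma mem_take_map_enum m (f : 'I_m -> nat) (i : nat) s :
  (s \in take i [seq f j | j <- enum 'I_m]) = [exists j : 'I_m, (j < i) && (f j == s)].
Proof.
rewrite -map_take; apply/mapP/existsP => [[j]|[j /andP [lt_ji /eqP <-]]].
  by rewrite in_take ?mem_enum // index_enum_ord => lt_ji ->; exists j; rewrite lt_ji eqxx.
by exists j; rewrite // in_take ?mem_enum // index_enum_ord.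
Qed.

Lemma map_enum_nth m (s : seq nat) : size s = m -> [seq nth 0 s j | j : 'I_m <- enum 'I_m] = s.
Proof. by move=> <-; rewrite (map_comp (nth 0 s) val) val_enum_ord -/(mkseq _ _) mkseq_nth. Qed.

Definition parking_spots m n (pi : {ffun 'I_m -> 'I_n}) (o : 'I_m -> nat) :=
  forall i : 'I_m, [/\ pi i <= o i < n, forall j : 'I_m, j < i -> o j != o i &
    forall s, pi i <= s < o i -> exists2 j : 'I_m, j < i & o j = s].

Lemma parks_at_prefsP m n (pi : {ffun 'I_m -> 'I_n}) (o : 'I_m -> nat) :
  parks_at n (prefs pi) [seq o j | j <- enum 'I_m] <-> parking_spots pi o.
Proof.
rewrite /parks_at /prefs !size_map -enumT size_enum_ord; split=> [[_ car] i|car].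
  have := car i (ltn_ord i); rewrite !nth_map_enum mem_take_map_enum.
  case=> rng /existsPn free min_o; split=> // [j lt_ji|s /min_o].
    by apply: contraTneq (free j) => ->; rewrite lt_ji eqxx.
  by rewrite mem_take_map_enum => /existsP [j /andP [lt_ji /eqP]]; exists j.
split=> // i lt_im; have [rng free min_o] := car (Ordinal lt_im).
rewrite -[i]/(val (Ordinal lt_im)) !nth_map_enum mem_take_map_enum; split=> //.
  by apply/existsPn => j; apply/negP => /andP [/free + /eqP oj]; rewrite oj eqxx.
move=> s /min_o [j lt_ji oj]; rewrite mem_take_map_enum.
by apply/existsP; exists j; rewrite lt_ji oj eqxx.
Qed.

Section ParkingFunction.
Variables (m n : nat) (pi : {ffun 'I_m -> 'I_n}).

Lemma parking_spotsP (o : 'I_m -> nat) :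
  parking_spots pi o -> is_pf pi /\ spots pi = [seq o j | j <- enum 'I_m].
Proof.
by move/parks_at_prefsP/parkP => park_pi; rewrite /is_pf /spots park_pi.
Qed.

Hypothesis pf_pi : is_pf pi.

Lemma spotsE : spots pi = [seq spot pi j | j <- enum 'I_m].
Proof.
move: pf_pi; rewrite /is_pf /spot /spots.
case E: park => [occ|] // _; case/parkP: E => size_occ _.
by rewrite map_enum_nth // size_occ size_map size_enum_ord.
Qed.

Lemma spotP : parking_spots pi (spot pi).
Proof.
apply/parks_at_prefsP; rewrite -spotsE; apply/parkP.
by move: pf_pi; rewrite /is_pf /spots; case: park.
Qed.

Lemma spot_inj : injective (spot pi).
Proof.
move=> i j eq_ij; apply/val_inj/eqP; case: ltngtP => // [lt_ij|lt_ji].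
  by have [_ /(_ i lt_ij)] := spotP j; rewrite eq_ij eqxx.
by have [_ /(_ j lt_ji)] := spotP i; rewrite eq_ij eqxx.
Qed.

Lemma spot_lt (i : 'I_m) : spot pi i < n.
Proof. by have [/andP []] := spotP i. Qed.

Lemma mem_spots s : (s \in spots pi) = [exists i, spot pi i == s].
Proof.
rewrite spotsE; apply/mapP/existsP => [[i _ ->]|[i /eqP <-]]; exists i => //.
exact: mem_enum.
Qed.

Lemma size_spots : size (spots pi) = m.
Proof. by rewrite spotsE size_map size_enum_ord. Qed.

Lemma spot_passed_taken (u : 'I_m) k :
  pi u <= k <= spot pi u -> exists2 i : 'I_m, i <= u & spot pi i = k.
Proof.
case/andP=> le_pk; rewrite leq_eqVlt => /predU1P [->|lt_k]; first by exists u.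
have [_ _ /(_ k)[|i /ltnW]] := spotP u; first by rewrite le_pk.
by exists i.
Qed.

End ParkingFunction.

(** * Priority search *)

Lemma card_node m n : m < n -> #|{: node m n}| = n.+1.
Proof. by move=> lt_mn; rewrite card_sum !card_ord; lia. Qed.

Lemma eq_inl m n (r r' : 'I_(n - m).+1) : (inl r == inl r' :> node m n) = (r == r').
Proof. by apply/eqP/eqP => [[]|->]. Qed.

Lemma head_filter_enum m (P : pred 'I_m) (u v : 'I_m) l :
  filter P (enum 'I_m) = u :: l -> P v -> u <= v.
Proof.
move=> E Pv; have : v \in filter P (enum 'I_m) by rewrite mem_filter Pv mem_enum.
have le_trans : transitive (fun i j : 'I_m => i <= j) by move=> ? ? ?; apply: leq_trans.
have sorted_P : sorted (fun i j : 'I_m => i <= j) (filter P (enum 'I_m)).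
  apply: sorted_filter => //.
  by have := iota_sorted 0 m; rewrite -val_enum_ord sorted_map.
rewrite E inE => /predU1P [-> //|]; move: sorted_P; rewrite E /=.
by move/(order_path_min le_trans)/allP; apply.
Qed.

Lemma search_grow m n (F : forestfun m n) :
  search F = grow (inl ord0) (next_node F) n.
Proof. by []. Qed.

Definition unblocked m n (F : forestfun m n) (vis : seq (node m n)) :=
  [seq v <- enum 'I_m | (inr v \notin vis) && (parent F (inr v) \in vis)].

Lemma next_nodeE m n (F : forestfun m n) (vis : seq (node m n)) : next_node F vis =
  if unblocked F vis is v :: _ then inr v else inl (inord (count (@is_root m n) vis)).
Proof. by []. Qed.

Definition search_inv m n (vis : seq (node m n)) :=
  [/\ uniq vis, count (@is_root m n) vis <= (n - m).+1 &
      forall r, (inl r \in vis) = (r < count (@is_root m n) vis)].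

Section Search.
Variables (m n : nat) (F : forestfun m n).
Hypotheses (lt_mn : m < n) (forest_F : is_forest F).

Local Notation x0 := (inl ord0 : node m n).
Local Notation visited k := (grow x0 (next_node F) k).

Lemma is_root_iter_parent (x : node m n) : is_root (iter m (parent F) x).
Proof.
case: x => [r|v]; last exact: (forallP forest_F v).
suff -> : forall k, iter k (parent F) (inl r) = inl r by [].
by elim=> //= k ->.
Qed.

Lemma unblocked_nil_notin (vis : seq (node m n)) (x : node m n) j :
  unblocked F vis = [::] -> x \notin vis -> iter j (parent F) x \notin vis.
Proof.
move=> no_unblocked x_new; elim: j => //= j; case: (iter j _ x) => [//|v] /= v_new.
apply/negP => par_v.
have : v \in unblocked F vis by rewrite mem_filter v_new par_v mem_enum.
by rewrite no_unblocked.
Qed.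

Lemma unblocked_nil_root (vis : seq (node m n)) :
  size vis <= n -> unblocked F vis = [::] -> exists r, inl r \notin vis.
Proof.
move=> size_vis no_unblocked.
have [x x_new] : exists x, x \notin vis.
  apply/existsP; rewrite -negb_forall; apply/forallP => all_vis.
  have := uniq_leq_size (enum_uniq {: node m n}) (fun x _ => all_vis x).
  by rewrite -cardT card_node // ltnNge size_vis.
have := unblocked_nil_notin m no_unblocked x_new.
by have := is_root_iter_parent x; case: (iter m _ x) => // r _ r_new; exists r.
Qed.

Lemma search_inv_visited k : k <= n -> search_inv (visited k).
Proof.
elim: k => [_|k IH lt_kn].
  by split=> // r; rewrite inE eq_inl -val_eqE ltnS leqn0.
have [uniq_vis count_le vis_roots] := IH (ltnW lt_kn).
rewrite [visited _]/= -/(visited k) next_nodeE; set c := count _ (visited k).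
case E: (unblocked F _) => [|v l].
  have lt_c : c < (n - m).+1.
    rewrite ltn_neqAle count_le andbT; apply/eqP => c_max.
    have [|r] := unblocked_nil_root _ E; first by rewrite size_grow.
    by rewrite vis_roots -/c c_max ltn_ord.
  have val_c : (inord c : 'I_(n - m).+1) = c :> nat by rewrite inordK.
  have count_c : count (@is_root m n) (rcons (visited k) (inl (inord c))) = c.+1.
    by rewrite -cats1 count_cat /= addn0 addn1.
  split; rewrite ?count_c //.
    by rewrite rcons_uniq uniq_vis andbT vis_roots val_c ltnn.
  move=> r; rewrite mem_rcons inE eq_inl vis_roots -val_eqE /= val_c -/c ltnS (leq_eqVlt r).
  by rewrite orbC.
have : v \in unblocked F (visited k) by rewrite E mem_head.
rewrite mem_filter => /andP [/andP [v_new _] _].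
have count_v : count (@is_root m n) (rcons (visited k) (inr v)) = c.
  by rewrite -cats1 count_cat /= !addn0.
split; rewrite ?count_v // ?rcons_uniq ?v_new //.
by move=> r; rewrite mem_rcons inE vis_roots.
Qed.

Lemma size_search : size (search F) = n.+1.
Proof. exact: size_grow. Qed.

Lemma uniq_search : uniq (search F).
Proof. by have [] := search_inv_visited (leqnn n). Qed.

Lemma mem_search (x : node m n) : x \in search F.
Proof.
apply: contraT => x_new.
have := uniq_leq_size (s1 := x :: search F) (s2 := enum {: node m n}).
rewrite /= x_new uniq_search -cardE card_node // size_search ltnn.
by move=> /(_ isT (fun y _ => mem_enum _ y)).
Qed.

Lemma step_le (x : node m n) : step F x <= n.
Proof. by rewrite -ltnS -size_search index_mem mem_search. Qed.

Lemma nth_step (x : node m n) : nth x0 (search F) (step F x) = x.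
Proof. exact/nth_index/mem_search. Qed.

Lemma step_nth t : t <= n -> step F (nth x0 (search F) t) = t.
Proof. by move=> le_tn; rewrite /step index_uniq ?size_search ?uniq_search. Qed.

Lemma step_inj : injective (step F).
Proof. by move=> x y eq_xy; rewrite -(nth_step x) eq_xy nth_step. Qed.

Lemma mem_visited k (x : node m n) : k <= n -> (x \in visited k) = (step F x <= k).
Proof. by move=> le_kn; rewrite -(take_grow _ _ le_kn) in_take ?mem_search. Qed.

Lemma step_inr_gt0 (v : 'I_m) : 0 < step F (inr v).
Proof.
rewrite lt0n; apply: contraTneq isT => step_v.
by have := nth_step (inr v); rewrite step_v nth_grow0.
Qed.

Lemma next_node_step (v : 'I_m) : next_node F (visited (step F (inr v)).-1) = inr v.
Proof.
have := nth_step (inr v); have := step_le (inr v); have := step_inr_gt0 v.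
by case: (step F _) => // t _ le_tn; rewrite nth_growS.
Qed.

Lemma step_parent (v : 'I_m) : step F (F v) < step F (inr v).
Proof.
have := next_node_step v; rewrite next_nodeE; case E: unblocked => [|u l] // [eq_uv].
have : v \in unblocked F (visited (step F (inr v)).-1) by rewrite E eq_uv mem_head.
have le_vn := leq_trans (leq_pred _) (step_le (inr v)).
rewrite mem_filter /= !mem_visited // => /andP [/andP [_ le_par] _].
by rewrite -(prednK (step_inr_gt0 v)) ltnS.
Qed.

Lemma step_between (v : 'I_m) q : step F (F v) < q < step F (inr v) ->
  exists2 u : 'I_m, u < v & step F (inr u) = q.
Proof.
case/andP=> lt_par_q lt_q_v; have le_vn := step_le (inr v).
have v_unblocked : v \in unblocked F (visited q.-1).
  by rewrite mem_filter mem_enum /= !mem_visited ?andbT; lia.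
have lt_q1n : q.-1 < n by lia.
have := nth_growS x0 (next_node F) lt_q1n; rewrite prednK ?next_nodeE; last lia.
case E: unblocked => [|u l] nth_q; first by rewrite E in v_unblocked.
have le_uv : u <= v.
  by apply: (head_filter_enum E); move: v_unblocked; rewrite mem_filter => /andP [].
have step_u : step F (inr u) = q by rewrite -nth_q step_nth // (leq_trans (ltnW lt_q_v)).
exists u => //; rewrite ltn_neqAle le_uv andbT.
by apply: contraTneq lt_q_v => /val_inj eq_uv; rewrite -step_u eq_uv ltnn.
Qed.

End Search.

(** * From forests to parking functions *)

(* With spots numbered from 0, car v prefers spot [step F (F v)] and will park
   at spot [(step F (inr v)).-1].  The default value of [insubd] is never used
   for a forest, where [step F (F v) < step F (inr v) <= n]. *)
Definition forest_pf m n (lt_mn : m < n) (F : forestfun m n) : {ffun 'I_m -> 'I_n} :=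
  [ffun v => insubd (widen_ord (ltnW lt_mn) v) (step F (F v))].

Section ForestParking.
Variables (m n : nat) (F : forestfun m n).
Hypotheses (lt_mn : m < n) (forest_F : is_forest F).

Local Notation pi := (forest_pf lt_mn F).
Local Notation st v := (step F (inr v)).

Lemma forest_pfE (v : 'I_m) : val (pi v) = step F (F v).
Proof.
rewrite ffunE val_insubd (leq_trans (step_parent lt_mn forest_F v)) //.
exact: step_le.
Qed.

Lemma pred_step_inj : injective (fun v : 'I_m => (st v).-1).
Proof.
move=> i j /= eq_ij; have := step_inr_gt0 lt_mn forest_F i.
have := step_inr_gt0 lt_mn forest_F j.
by move=> ? ?; have /(step_inj lt_mn forest_F) [] : st i = st j by lia.
Qed.

Lemma forest_pf_parking_spots : parking_spots pi (fun v => (st v).-1).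
Proof.
move=> i; have := step_parent lt_mn forest_F i; have := step_le lt_mn forest_F (inr i).
have := step_inr_gt0 lt_mn forest_F i; rewrite forest_pfE => st_i_gt0 le_st_i lt_par_i.
split=> [|j lt_ji|s rng_s]; first lia.
  by apply: contraTneq lt_ji => /pred_step_inj ->; rewrite ltnn.
have [|u lt_ui st_u] := step_between lt_mn forest_F (q := s.+1) (v := i); first lia.
by exists u; rewrite // st_u.
Qed.

Lemma is_pf_forest_pf : is_pf pi.
Proof. by case: (parking_spotsP forest_pf_parking_spots). Qed.

Lemma spots_forest_pf : spots pi = [seq (st j).-1 | j <- enum 'I_m].
Proof. by case: (parking_spotsP forest_pf_parking_spots). Qed.

Lemma spot_forest_pf (v : 'I_m) : spot pi v = (st v).-1.
Proof. by rewrite /spot spots_forest_pf nth_map_enum. Qed.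

Lemma lucky_forest_pf : lucky pi = psa F.
Proof.
apply: eq_card => v; rewrite !inE spot_forest_pf forest_pfE.
by have := step_inr_gt0 lt_mn forest_F v; case: (st v).
Qed.

Lemma probes_forest_pf : probes pi = wait F.
Proof.
apply: eq_bigr => v _; rewrite spot_forest_pf forest_pfE /=.
by have := step_parent lt_mn forest_F v; lia.
Qed.

Lemma mem_spots_forest_pf s : (s \in spots pi) = [exists u : 'I_m, st u == s.+1].
Proof.
rewrite spots_forest_pf; apply/mapP/existsP => [[u _ ->]|[u /eqP st_u]].
  by exists u; have := step_inr_gt0 lt_mn forest_F u; case: (st u).
by exists u; rewrite ?mem_enum ?st_u.
Qed.

Lemma index_spots_forest_pf (u : 'I_m) : index (st u).-1 (spots pi) = u.
Proof.
rewrite spots_forest_pf (index_map (f := fun j : 'I_m => (st j).-1)) ?index_enum_ord //.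
exact: pred_step_inj.
Qed.

Lemma step_iter_parent_le k (x : node m n) : step F (iter k (parent F) x) <= step F x.
Proof.
elim: k => //= k; case: (iter k _ x) => [//|u] /= le_u.
exact: leq_trans (ltnW (step_parent lt_mn forest_F u)) le_u.
Qed.

Lemma step_ancestor_lt k (v : 'I_m) : step F (iter k.+1 (parent F) (inr v)) < st v.
Proof.
rewrite iterSr; apply: leq_ltn_trans (step_iter_parent_le _ _) _.
exact: step_parent.
Qed.

Lemma step_between_ancestor (b : nat) k (v : 'I_m) :
  (forall j (z : 'I_m), j < k -> iter j (parent F) (inr v) = inr z -> z <= b) ->
  forall q, step F (iter k (parent F) (inr v)) < q < st v ->
  exists2 w : 'I_m, w <= b & st w = q.
Proof.
elim: k => [_ q|k IH bounded q]; first by case/andP=> /ltn_trans h /h; rewrite ltnn.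
rewrite iterS; case E: (iter k _ _) => [r|z] /=.
  by rewrite -E; apply: IH => j z lt_jk; apply: bounded; apply: ltnW.
have le_zb := bounded k z (ltnSn k) E.
case/andP=> lt_par_q lt_q_v; case: (ltngtP q (st z)) => [lt_q_z|lt_z_q|->].
- have [|w lt_wz st_w] := step_between lt_mn forest_F (v := z) (q := q); first exact/andP.
  by exists w; first exact: leq_trans (ltnW lt_wz) le_zb.
- apply: IH; last by rewrite E lt_z_q.
  by move=> j z' lt_jk; apply: bounded; apply: ltnW.
- by exists z.
Qed.

Lemma forest_rec_of_pf_rec (v : 'I_m) : v \in pf_rec pi -> v \in forest_rec F.
Proof.
rewrite !inE spot_forest_pf => /forallP pf_rec_v; apply/forallP => k; apply/implyP => k_gt0.
case E: (iter k _ _) => [//|u].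
have lt_uv : st u < st v by have := step_ancestor_lt k.-1 v; rewrite prednK // E.
have gap := step_between_ancestor (b := m) (k := k) (v := v) (fun j z _ _ => ltnW (ltn_ord z)).
rewrite E in gap.
have st_u_gt0 := step_inr_gt0 lt_mn forest_F u.
have lt_u_n : (st u).-1 < n by have := step_le lt_mn forest_F (inr v); lia.
have := pf_rec_v (Ordinal lt_u_n); rewrite /= index_spots_forest_pf => /implyP; apply.
apply/andP; split; first lia.
apply/allP => s; rewrite mem_iota mem_spots_forest_pf => rng_s; apply/existsP.
have [<-|lt_u_s] : st u = s.+1 \/ st u < s.+1 by lia.
  by exists u.
by have [|w _ <-] := gap s.+1; [lia | exists w].
Qed.

Lemma pf_rec_of_forest_rec (v : 'I_m) : v \in forest_rec F -> v \in pf_rec pi.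
Proof.
rewrite !inE spot_forest_pf => /forallP rec_v; apply/forallP => t.
apply/implyP => /andP [lt_t_v /allP occupied].
have occ s : t <= s < (st v).-1 -> exists u : 'I_m, st u = s.+1.
  move=> rng_s; have /existsP [u /eqP st_u] : [exists u : 'I_m, st u == s.+1].
    by rewrite -mem_spots_forest_pf; apply: occupied; rewrite mem_iota; lia.
  by exists u.
have [|u st_u] := occ t; first lia.
have -> : val t = (st u).-1 by rewrite st_u.
rewrite index_spots_forest_pf.
set x := iter m (parent F) (inr v).
(* The occupied spots from [t] up to [v] are visited after the root [x] of the tree of [v]. *)
have lt_x_u : step F x < st u.
  rewrite ltnNge; apply/negP => le_u_x.
  have le_x_v : step F x <= st v := step_iter_parent_le m (inr v).
  have root_x : is_root x := is_root_iter_parent forest_F (inr v).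
  have [w st_w] : exists w : 'I_m, st w = step F x.
    have [|w st_w] := occ (step F x).-1; last by exists w; lia.
    suff : step F x != st v by lia.
    by apply: contraTneq root_x => /(step_inj lt_mn forest_F) ->.
  by move: root_x; rewrite -(step_inj lt_mn forest_F st_w).
have ancestors_le j (z : 'I_m) : j < m -> iter j (parent F) (inr v) = inr z -> z <= v.
  case: j => [_ [<-] //|j lt_jm E].
  have := rec_v (@Ordinal m.+1 j.+1 (ltnW lt_jm)).
  by rewrite (_ : nat_of_ord _ = j.+1) // E => /ltnW.
have [|w le_wv] := step_between_ancestor ancestors_le (q := st u).
  by rewrite lt_x_u st_u; lia.
move/(step_inj lt_mn forest_F) => [eq_wu]; rewrite -eq_wu ltn_neqAle le_wv andbT.
by apply: contraTneq lt_t_v => /val_inj <-; rewrite eq_wu st_u ltnn.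
Qed.

Lemma pf_rec_forest_pf : pf_rec pi = forest_rec F.
Proof.
by apply/setP => v; apply/idP/idP; [apply: forest_rec_of_pf_rec | apply: pf_rec_of_forest_rec].
Qed.

End ForestParking.

(** * From parking functions to forests *)

(* The node visited at step [size w]: the car parked at spot [(size w).-1],
   or else the next root, numbered as in [next_node]. *)
Definition pf_next m n (pi : {ffun 'I_m -> 'I_n}) (w : seq (node m n)) : node m n :=
  if [pick i | spot pi i == (size w).-1] is Some i then inr i
  else inl (inord (count (@is_root m n) w)).

Definition pf_traversal m n (pi : {ffun 'I_m -> 'I_n}) := grow (inl ord0) (pf_next pi) n.

Definition pf_forest m n (pi : {ffun 'I_m -> 'I_n}) : forestfun m n :=
  [ffun v => nth (inl ord0) (pf_traversal pi) (pi v)].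

Lemma is_forest_of_rank m n (F : forestfun m n) (rk : 'I_m -> nat) :
  (forall v, rk v < m) -> (forall v u, F v = inr u -> rk u < rk v) -> is_forest F.
Proof.
move=> rk_lt rk_parent.
have rk_ancestor k v u : iter k (parent F) (inr v) = inr u -> rk u + k <= rk v.
  elim: k u => [u [->]|k IH u]; first by rewrite addn0.
  rewrite iterS; case E: (iter k _ _) => [//|w] /= /rk_parent lt_uw.
  by have := IH w E; lia.
apply/forallP => v; case E: (iter m _ _) => [//|u].
by have := rk_ancestor _ _ _ E; have := rk_lt v; lia.
Qed.

Section Traversal.
Variables (m n : nat) (pi : {ffun 'I_m -> 'I_n}).
Hypothesis pf_pi : is_pf pi.

Local Notation x0 := (inl ord0 : node m n).
Local Notation trav := (pf_traversal pi).

Definition empty_before p := count (fun s => s \notin spots pi) (iota 0 p).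

Lemma size_trav : size trav = n.+1.
Proof. exact: size_grow. Qed.

Lemma nth_trav_succ s : s < n -> nth x0 trav s.+1 =
  if [pick i | spot pi i == s] is Some i then inr i
  else inl (inord (count (@is_root m n) (take s.+1 trav))).
Proof.
move=> lt_sn; rewrite /pf_traversal (nth_growS _ _ lt_sn) (take_grow _ _ (ltnW lt_sn)).
by rewrite {1}/pf_next size_grow.
Qed.

Lemma nth_trav_spot (i : 'I_m) : nth x0 trav (spot pi i).+1 = inr i.
Proof.
rewrite nth_trav_succ ?(spot_lt pf_pi) //; case: pickP => [j /eqP /(spot_inj pf_pi) -> //|].
by move/(_ i); rewrite eqxx.
Qed.

Lemma is_root_trav s : s < n -> is_root (nth x0 trav s.+1) = (s \notin spots pi).
Proof.
move=> lt_sn; rewrite nth_trav_succ // (mem_spots pf_pi); case: pickP => [i spot_i|none] /=.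
  by apply/esym/negbF/existsP; exists i.
by apply/esym/existsPn => i; rewrite none.
Qed.

Lemma count_root_trav p : p <= n -> count (@is_root m n) (take p.+1 trav) = (empty_before p).+1.
Proof.
elim: p => [_|p IH lt_pn].
  by rewrite (take_nth x0) ?size_trav // take0 /pf_traversal nth_grow0.
rewrite (take_nth x0); last by rewrite size_trav ltnS.
rewrite -cats1 count_cat (IH (ltnW lt_pn)) /= (is_root_trav lt_pn).
by rewrite /empty_before -[p.+1]addn1 iotaD count_cat /= addn0 addSn.
Qed.

Lemma empty_before_total : empty_before n = n - m.
Proof.
suff count_spots : count (mem (spots pi)) (iota 0 n) = m.
  have := count_predC (mem (spots pi)) (iota 0 n).
  rewrite size_iota count_spots /empty_before.
  by rewrite (eq_count (a2 := fun s => s \notin spots pi)) //; lia.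
rewrite -size_filter -[RHS](size_spots pf_pi); apply/perm_size/uniq_perm.
- exact/filter_uniq/iota_uniq.
- by rewrite spotsE // map_inj_uniq ?enum_uniq //; apply: spot_inj.
move=> s; rewrite mem_filter mem_iota /= andb_idr // (mem_spots pf_pi) => /existsP [i /eqP <-].
exact: spot_lt.
Qed.

Lemma empty_beforeS p : empty_before p.+1 = empty_before p + (p \notin spots pi).
Proof. by rewrite /empty_before -[p.+1]addn1 iotaD count_cat /= addn0. Qed.

Lemma empty_before_mono p q : p <= q -> empty_before p <= empty_before q.
Proof. by move/subnKC <-; rewrite /empty_before iotaD count_cat leq_addr. Qed.

Lemma nth_trav_inr p (i : 'I_m) : p <= n -> nth x0 trav p = inr i -> p = (spot pi i).+1.
Proof.
case: p => [_|s lt_sn]; first by rewrite /pf_traversal nth_grow0.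
by rewrite nth_trav_succ //; case: pickP => [j /eqP <- [->] //|].
Qed.

Lemma nth_trav_inl p r : p <= n -> nth x0 trav p = inl r -> val r = empty_before p.
Proof.
case: p => [_|s lt_sn]; first by rewrite /pf_traversal nth_grow0 => -[<-].
rewrite nth_trav_succ //; case: pickP => // none [<-].
have free_s : s \notin spots pi by rewrite (mem_spots pf_pi); apply/existsPn => i; rewrite none.
have := empty_before_mono lt_sn; rewrite empty_before_total empty_beforeS free_s addn1.
by rewrite (count_root_trav (ltnW lt_sn)) => ?; rewrite /= inordK.
Qed.

Lemma empty_before_root_lt p q :
  p < q -> q <= n -> is_root (nth x0 trav q) -> empty_before p < empty_before q.
Proof.
case: q => // s le_ps lt_sn; rewrite is_root_trav // => free_s.
by rewrite empty_beforeS free_s addn1 ltnS empty_before_mono.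
Qed.

Lemma uniq_trav : uniq trav.
Proof.
apply/(uniqP x0) => p q; rewrite !inE size_trav !ltnS => le_pn le_qn.
case E: (nth x0 trav p) => [r|i] eq_pq; last first.
  by rewrite (nth_trav_inr le_pn E) (nth_trav_inr le_qn (esym eq_pq)).
have root_p : is_root (nth x0 trav p) by rewrite E.
have root_q : is_root (nth x0 trav q) by rewrite -eq_pq.
have := nth_trav_inl le_qn (esym eq_pq); rewrite (nth_trav_inl le_pn E).
case: (ltngtP p q) => [lt_pq|lt_qp|//] eq_empty.
  by have := empty_before_root_lt lt_pq le_qn root_q; rewrite eq_empty ltnn.
by have := empty_before_root_lt lt_qp le_pn root_p; rewrite eq_empty ltnn.
Qed.

Lemma index_trav p : p <= n -> index (nth x0 trav p) trav = p.
Proof. by move=> le_pn; rewrite index_uniq ?size_trav ?uniq_trav. Qed.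

Local Notation spot_rank u := #|[set w | spot pi w < spot pi u]|.

Lemma spot_rank_lt (u : 'I_m) : spot_rank u < m.
Proof.
suff : #|[set w | spot pi w < spot pi u]| < #|'I_m| by rewrite card_ord.
rewrite -cardsT; apply: proper_card; rewrite properT.
by apply/eqP => all_lt; have := in_setT u; rewrite -all_lt inE ltnn.
Qed.

Lemma spot_rank_mono (u v : 'I_m) : spot pi u < spot pi v -> spot_rank u < spot_rank v.
Proof.
move=> lt_uv; apply: proper_card; apply/properP; split.
  by apply/subsetP => w; rewrite !inE => /ltn_trans; apply.
by exists u; rewrite !inE ?ltnn.
Qed.

Lemma pf_forest_spot (v u : 'I_m) : pf_forest pi v = inr u -> spot pi u < spot pi v.
Proof.
rewrite ffunE => /(nth_trav_inr (ltnW (ltn_ord (pi v)))) pi_v.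
by have [/andP [+ _] _ _] := spotP pf_pi v; rewrite pi_v.
Qed.

Lemma is_forest_pf_forest : is_forest (pf_forest pi).
Proof.
apply: (is_forest_of_rank (rk := fun u => spot_rank u)) => [|v u /pf_forest_spot].
  exact: spot_rank_lt.
exact: spot_rank_mono.
Qed.

Lemma mem_take_trav k p : k <= n -> p <= n -> (nth x0 trav p \in take k.+1 trav) = (p <= k).
Proof.
by move=> le_kn le_pn; rewrite in_take ?mem_nth ?size_trav // index_trav.
Qed.

Lemma mem_unblocked_pf_forest k (v : 'I_m) : k <= n ->
  (v \in unblocked (pf_forest pi) (take k.+1 trav)) = (pi v <= k <= spot pi v).
Proof.
move=> le_kn; rewrite mem_filter mem_enum andbT /= ffunE -nth_trav_spot.
rewrite (mem_take_trav le_kn (spot_lt pf_pi v)) (mem_take_trav le_kn (ltnW (ltn_ord (pi v)))).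
by rewrite -ltnNge ltnS andbC.
Qed.

Lemma search_pf_forest : search (pf_forest pi) = trav.
Proof.
rewrite search_grow; symmetry; apply: eq_grow => k lt_kn.
rewrite {1}/pf_next next_nodeE size_grow -(take_grow _ _ (ltnW lt_kn)) -/trav /=.
have passing v := mem_unblocked_pf_forest v (ltnW lt_kn).
case: pickP => [i /eqP spot_i|none].
  have i_passing : i \in unblocked (pf_forest pi) (take k.+1 trav).
    by rewrite passing -spot_i leqnn andbT; have [/andP []] := spotP pf_pi i.
  case E: unblocked => [|u l]; first by rewrite E in i_passing.
  have le_ui : u <= i.
    by apply: (head_filter_enum E); move: i_passing; rewrite mem_filter => /andP [].
  have /(spot_passed_taken pf_pi) [i' le_iu] : pi u <= k <= spot pi u.
    by rewrite -passing E mem_head.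
  rewrite -spot_i => /(spot_inj pf_pi) eq_i; congr inr; apply/val_inj/eqP.
  by rewrite eqn_leq le_ui -eq_i le_iu.
case E: unblocked => [//|u l].
have /(spot_passed_taken pf_pi) [i _ /eqP] : pi u <= k <= spot pi u.
  by rewrite -passing E mem_head.
by rewrite none.
Qed.

End Traversal.

Section ForestTraversal.
Variables (m n : nat) (F : forestfun m n).
Hypotheses (lt_mn : m < n) (forest_F : is_forest F).

Local Notation x0 := (inl ord0 : node m n).

Lemma search_forest_pf : search F = pf_traversal (forest_pf lt_mn F).
Proof.
rewrite search_grow; apply: eq_grow => k lt_kn.
have step_next : step F (next_node F (grow x0 (next_node F) k)) = k.+1.
  by rewrite -(nth_growS x0 _ lt_kn) step_nth.
rewrite /pf_next size_grow /=; case: pickP => [i /eqP|none].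
  rewrite spot_forest_pf // => spot_i; apply: (step_inj lt_mn forest_F).
  by rewrite step_next -spot_i prednK // (step_inr_gt0 lt_mn forest_F).
move: step_next; rewrite next_nodeE; case: unblocked => [//|v l] step_v.
by have /eqP := none v; rewrite spot_forest_pf // step_v.
Qed.

Lemma forest_pfK : pf_forest (forest_pf lt_mn F) = F.
Proof.
apply/ffunP => v; rewrite ffunE -search_forest_pf forest_pfE //.
exact: nth_step.
Qed.

End ForestTraversal.

Lemma pf_forestK m n (lt_mn : m < n) (pi : {ffun 'I_m -> 'I_n}) :
  is_pf pi -> forest_pf lt_mn (pf_forest pi) = pi.
Proof.
move=> pf_pi; apply/ffunP => v; apply/val_inj.
rewrite forest_pfE ?is_forest_pf_forest // /step search_pf_forest // ffunE.
by rewrite index_trav // ltnW.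
Qed.

Theorem theorem4p6 (m n : nat) (hmn : m < n) (R : {set 'I_m}) (a b : nat) :
  #|[set F : forestfun m n | [&& is_forest F, forest_rec F == R,
                                 psa F == a & wait F == b]]|
  = #|[set pi : {ffun 'I_m -> 'I_n} | [&& is_pf pi, pf_rec pi == R,
                                          lucky pi == a & probes pi == b]]|.
Proof.
set forests := [set F | _]; set pfs := [set pi | _].
have forest_pf_stats F : is_forest F -> (forest_pf hmn F \in pfs) = (F \in forests).
  move=> forest_F; rewrite !inE forest_F is_pf_forest_pf // pf_rec_forest_pf //.
  by rewrite lucky_forest_pf // probes_forest_pf.
have forest_of F : F \in forests -> is_forest F by rewrite inE => /andP [].
have <- : forest_pf hmn @: forests = pfs.
  apply/setP => pi; apply/imsetP/idP => [[F F_in ->]|pi_in].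
    by rewrite forest_pf_stats ?forest_of.
  have pf_pi : is_pf pi by move: pi_in; rewrite inE => /andP [].
  have forest_pi := is_forest_pf_forest pf_pi.
  exists (pf_forest pi); last by rewrite pf_forestK.
  by rewrite -forest_pf_stats // pf_forestK.
rewrite card_in_imset // => F1 F2 /forest_of forest_F1 /forest_of forest_F2 eq_F12.
by rewrite -(forest_pfK hmn forest_F1) eq_F12 forest_pfK.
Qed.
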